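(* Let $\mathcal X,\mathcal Y$ be nonempty convex compact sets and $\mathcal L:\mathcal X\times\mathcal Y\to\mathbb R$ a differentiable $(\mu_{\mathcal X},\mu_{\mathcal Y})$-uniformly strongly convex-concave function with saddle point $(x^*,y^* )$. Then for every $z\in\mathcal X\times\mathcal Y$, $$h(z)\le P_{\mathcal L}\sqrt{2w(z)},\qquad\text{and}\qquad P_{\mathcal L}\le\sqrt2\sup_{z\in\mathcal X\times\mathcal Y}\max\left\{\frac{\|\nabla_x\mathcal L(z)\|_{\mathcal X^*}}{\sqrt{\mu_{\mathcal X}}},\frac{\|\nabla_y\mathcal L(z)\|_{\mathcal Y^*}}{\sqrt{\mu_{\mathcal Y}}}\right\}.$$
   Context: Norms $\|\cdot\|_{\mathcal X},\|\cdot\|_{\mathcal Y}$ with dual norms $\|\cdot\|_{\mathcal X^*},\|\cdot\|_{\mathcal Y^*}$. $(\mu_{\mathcal X},\mu_{\mathcal Y})$-uniformly strongly convex-concave ($\mu_{\mathcal X},\mu_{\mathcal Y}>0$): $\mathcal L(\cdot,y)$ is $\mu_{\mathcal X}$-strongly convex w.r.t. $\|\cdot\|_{\mathcal X}$ for every $y$ and $-\mathcal L(x,\cdot)$ is $\mu_{\mathcal Y}$-strongly convex w.r.t. $\|\cdot\|_{\mathcal Y}$ for every $x$. Saddle point: $\mathcal L(x^*,y)\le\mathcal L(x^*,y^* )\le\mathcal L(x,y^* )$ for all $x,y$; $\mathcal L^*:=\mathcal L(x^*,y^* )$. For $z=(x,y)$: $h(z):=\max_{y'}\mathcal L(x,y')-\min_{x'}\mathcal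 L(x',y)$, $w(z):=\mathcal L(x,y^* )-\mathcal L(x^*,y)$. With $\hat y(x):=\arg\max_{y}\mathcal L(x,y)$ and $\hat x(y):=\arg\min_x\mathcal L(x,y)$: $P_{\mathcal X}:=\sup_{x\ne x^*}\frac{\langle\nabla_x\mathcal L(x,\hat y(x)),x-x^*\rangle}{\sqrt{\mathcal L(x,y^* )-\mathcal L^*}}$, $P_{\mathcal Y}:=\sup_{y\ne y^*}\frac{\langle\nabla_y\mathcal L(\hat x(y),y),y^*-y\rangle}{\sqrt{\mathcal L^*-\mathcal L(x^*,y)}}$, $P_{\mathcal L}:=\max\{P_{\mathcal X},P_{\mathcal Y}\}$. *)

From HB Require Import structures.
From mathcomp Require Import all_boot all_order all_algebra.
From mathcomp Require Import all_classical all_reals all_analysis.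
Set Implicit Arguments. Unset Strict Implicit. Unset Printing Implicit Defensive.
Import Order.TTheory GRing.Theory Num.Theory.
Import numFieldNormedType.Exports.
Local Open Scope classical_set_scope.
Local Open Scope ring_scope.

Section Defs.
Variable R : realType.

Definition is_norm (n : nat) (N : 'rV[R]_n -> R) : Prop :=
  [/\ forall x, 0 <= N x,
      forall x, N x = 0 -> x = 0,
      forall (a : R) x, N (a *: x) = `|a| * N x
    & forall x y, N (x + y) <= N x + N y].

Definition dual_norm (n : nat) (N : 'rV[R]_n -> R) (g : 'rV[R]_n -> R) : R :=
  sup [set g u | u in [set u | N u <= 1]].

Definition convex_set_rV (n : nat) (X : set 'rV[R]_n) : Prop :=
  forall a b (t : R), X a -> X b -> 0 <= t <= 1 -> X (t *: a + (1 - t) *: b).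

Definition strongly_convex_on (n : nat) (N : 'rV[R]_n -> R) (mu : R)
  (X : set 'rV[R]_n) (f : 'rV[R]_n -> R) : Prop :=
  forall a b (t : R), X a -> X b -> 0 <= t <= 1 ->
    f (t *: a + (1 - t) *: b)
      <= t * f a + (1 - t) * f b - mu / 2 * t * (1 - t) * N (a - b) ^+ 2.

Definition Lpair (n m : nat) (L : 'rV[R]_n -> 'rV[R]_m -> R)
  (z : 'rV[R]_n * 'rV[R]_m) : R := L z.1 z.2.

(* Partial gradients, given as the linear functionals u |-> <grad, u>. *)
Definition grad_x (n m : nat) (L : 'rV[R]_n -> 'rV[R]_m -> R) x y
  : 'rV[R]_n -> R := fun u => 'd (Lpair L) (x, y) (u, 0).
Definition grad_y (n m : nat) (L : 'rV[R]_n -> 'rV[R]_m -> R) x y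
  : 'rV[R]_m -> R := fun v => 'd (Lpair L) (x, y) (0, v).

Definition yhat (n m : nat) (L : 'rV[R]_n -> 'rV[R]_m -> R)
  (Y : set 'rV[R]_m) x : 'rV[R]_m :=
  xget 0 [set y | Y y /\ forall y', Y y' -> L x y' <= L x y].
Definition xhat (n m : nat) (L : 'rV[R]_n -> 'rV[R]_m -> R)
  (X : set 'rV[R]_n) y : 'rV[R]_n :=
  xget 0 [set x | X x /\ forall x', X x' -> L x y <= L x' y].

Definition gap (n m : nat) (L : 'rV[R]_n -> 'rV[R]_m -> R)
  (X : set 'rV[R]_n) (Y : set 'rV[R]_m) (z : 'rV[R]_n * 'rV[R]_m) : R :=
  sup [set L z.1 y' | y' in Y] - inf [set L x' z.2 | x' in X].

Definition wgap (n m : nat) (L : 'rV[R]_n -> 'rV[R]_m -> R) xs ys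
  (z : 'rV[R]_n * 'rV[R]_m) : R := L z.1 ys - L xs z.2.

Local Open Scope ereal_scope.

Definition P_X (n m : nat) (L : 'rV[R]_n -> 'rV[R]_m -> R)
  (X : set 'rV[R]_n) (Y : set 'rV[R]_m) xs ys : \bar R :=
  ereal_sup [set ((grad_x L x (yhat L Y x) (x - xs)
                  / Num.sqrt (L x ys - L xs ys))%R)%:E
            | x in [set x | X x /\ x <> xs]].

Definition P_Y (n m : nat) (L : 'rV[R]_n -> 'rV[R]_m -> R)
  (X : set 'rV[R]_n) (Y : set 'rV[R]_m) xs ys : \bar R :=
  ereal_sup [set ((grad_y L (xhat L X y) y (ys - y)
                  / Num.sqrt (L xs ys - L xs y))%R)%:E
            | y in [set y | Y y /\ y <> ys]].

Definition P_L (n m : nat) (L : 'rV[R]_n -> 'rV[R]_m -> R)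
  (X : set 'rV[R]_n) (Y : set 'rV[R]_m) xs ys : \bar R :=
  maxe (P_X L X Y xs ys) (P_Y L X Y xs ys).

End Defs.

(* At the saddle point (xs, ys), L(x, yhat x) - L(xs, ys) <= L(x, yhat x) - L(xs, yhat x), and
   convexity of L(., yhat x) bounds this by <grad_x L(x, yhat x), x - xs>, which is at most
   P_X sqrt (L(x, ys) - L(xs, ys)) by definition of P_X; symmetrically in y, and
   sqrt a + sqrt b <= sqrt (2 (a + b)) bounds the gap.  For the bound on P_L, strong
   convexity and optimality of xs give L(x, ys) - L(xs, ys) >= muX / 2 * NX (x - xs) ^ 2,
   while <g, x - xs> <= ||g||_* NX (x - xs).  The dual norm is finite because every norm
   on R^n dominates a multiple of the sup norm, by compactness of the unit sphere. *)

From HB Require Import structures.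
From mathcomp Require Import all_boot all_order all_algebra.
From mathcomp Require Import all_classical all_reals all_analysis.
From mathcomp Require Import lra ring.
Import Order.TTheory GRing.Theory Num.Theory.
Import numFieldNormedType.Exports.
Local Open Scope classical_set_scope.
Local Open Scope ring_scope.

Set Implicit Arguments.
Unset Strict Implicit.

Section one_sided_derivative.
Variables (R : realType) (V : normedModType R) (f : V -> R) (a v : V).
Hypothesis df : differentiable f a.

Let near_right_unit : \forall h \near (0 : R)^'+, 0 < h <= 1.
Proof.
apply/nbhs_ballP; exists 1 => //= h.
by rewrite /ball /= sub0r normrN => /ltr_normlW h1 h0; rewrite h0 ltW.
Qed.

Let right_dnbhs : (0 : R)^'+ `=>` (0 : R)^'.
Proof.
move=> A; rewrite /dnbhs /within /= => nearA.
by apply: filterS nearA => h Ah /lt0r_neq0; exact: Ah.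
Qed.

Lemma diff_quotient_cvg_right :
  (fun h : R => h^-1 * (f (h *: v + a) - f a)) @ (0 : R)^'+ --> 'd f a v.
Proof.
rewrite -deriveE //.
have quotient_cvg : _ @ 0^' --> 'D_v f a := diff_derivable df.
by apply: cvg_trans quotient_cvg => A; exact: right_dnbhs.
Qed.

Lemma diff_le_of_secant_le c :
  (forall h, 0 < h <= 1 -> f (h *: v + a) - f a <= h * c) -> 'd f a v <= c.
Proof.
move=> secant; rewrite -(cvg_lim _ diff_quotient_cvg_right) //.
apply: limr_le; first by apply/cvg_ex; eexists; exact: diff_quotient_cvg_right.
apply: filterS near_right_unit => h /[dup] /andP[h0 _] /secant.
by rewrite ler_pdivrMl.
Qed.

End one_sided_derivative.

Section first_order_convexity.
Variables (R : realType) (V : normedModType R) (f : V -> R).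

Lemma convex_diff_le a b : differentiable f a ->
  (forall t, 0 < t <= 1 -> f (t *: b + (1 - t) *: a) <= t * f b + (1 - t) * f a) ->
  'd f a (b - a) <= f b - f a.
Proof.
move=> df cvx; apply: diff_le_of_secant_le => // t /cvx.
rewrite scalerBr scalerBl scale1r addrA addrAC; lra.
Qed.

End first_order_convexity.

Section finite_dimensional_norm.
Variables (R : realType) (n : nat).

Lemma mx_coord_le_norm (u : 'rV[R]_n) i : `|u ord0 i| <= `|u|.
Proof.
have /mapP[j _ ->] : `|u ord0 i| \in [seq `|u x.1 x.2| | x : 'I_1 * 'I_n].
  by apply/mapP; exists (ord0, i) => //=; rewrite mem_enum.
rewrite [leRHS]/Num.Def.normr /= mx_normrE.
by apply/bigmax_geP; right; exists j.
Qed.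

Lemma sublinear_le_mx_norm (phi psi : 'rV[R]_n -> R) :
  (forall x y, phi (x + y) <= phi x + phi y) -> phi 0 <= 0 ->
  (forall a x, phi (a *: x) <= `|a| * psi x) -> (forall x, 0 <= psi x) ->
  forall u, phi u <= (\sum_(i < n) psi (delta_mx ord0 i)) * `|u|.
Proof.
move=> phiD phi0 phiZ psi_ge0 u; rewrite {1}(row_sum_delta u).
apply: (@le_trans _ _ (\sum_(i < n) `|u ord0 i| * psi (delta_mx ord0 i))).
  by elim/big_rec2: _ => // i y1 y2 _ IH; apply: le_trans (phiD _ _) _; apply: lerD.
rewrite mulr_suml; apply: ler_sum => i _.
by rewrite mulrC ler_wpM2l // mx_coord_le_norm.
Qed.

Variable N : 'rV[R]_n -> R.
Hypothesis normN : is_norm N.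

Lemma is_norm0 : N 0 = 0.
Proof. by case: normN => _ _ NZ _; rewrite -(scale0r 0) NZ normr0 mul0r. Qed.

Lemma is_normN u : N (- u) = N u.
Proof. by case: normN => _ _ NZ _; rewrite -scaleN1r NZ normrN normr1 mul1r. Qed.

Lemma is_norm_gt0 u : u != 0 -> 0 < N u.
Proof.
case: normN => N_ge0 N_eq0 _ _ u0.
by rewrite lt_neqAle N_ge0 andbT eq_sym; apply: contra u0 => /eqP/N_eq0/eqP.
Qed.

Lemma is_norm_le_mx_norm : exists2 K, 0 <= K & forall u, N u <= K * `|u|.
Proof.
case: normN => N_ge0 _ NZ ND; exists (\sum_(i < n) N (delta_mx ord0 i)).
  exact: sumr_ge0.
by apply: sublinear_le_mx_norm; rewrite ?is_norm0 // => a x; rewrite NZ.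
Qed.

Lemma is_norm_continuous : continuous N.
Proof.
have [K K_ge0 NK] := is_norm_le_mx_norm.
case: normN => _ _ _ ND u.
apply/(cvgrPdist_le (FF := nbhs_filter u)) => e e_gt0.
have K1_gt0 : 0 < K + 1 by rewrite ltr_wpDl.
near=> t.
have Nut : N (u - t) <= e.
  apply: le_trans (NK _) _; apply: le_trans (_ : (K + 1) * `|u - t| <= e).
    by rewrite ler_wpM2r // lerDl.
  rewrite mulrC -ler_pdivlMr //; near: t.
  by apply: cvgr_dist_le; [exact: cvg_id | exact: divr_gt0].
have Ntu : N (t - u) <= e by rewrite -opprB is_normN.
have Nt : N t <= N u + N (t - u) by have := ND u (t - u); rewrite addrC subrK.
have Nu : N u <= N t + N (u - t) by have := ND t (u - t); rewrite addrC subrK.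
rewrite ler_norml; apply/andP; split; lra.
Unshelve. all: by end_near. Qed.

Lemma mx_norm_le_is_norm : exists2 c, 0 < c & forall u, `|u| <= c * N u.
Proof.
pose S := [set u : 'rV[R]_n | `|u| = 1].
have S_dir u : u != 0 -> S (`|u|^-1 *: u).
  by move=> u0; rewrite /S /= normrZ normfV normr_id mulVf // normr_eq0.
have N_dir u : N u = `|u| * N (`|u|^-1 *: u).
  case: normN => _ _ NZ _.
  have [->|u0] := eqVneq u 0; first by rewrite normr0 mul0r is_norm0.
  by rewrite NZ normfV normr_id mulrA mulfV ?mul1r // normr_eq0.
have [[v0 Sv0]|S0] := pselect (S !=set0); last first.
  exists 1 => // u; have [->|u0] := eqVneq u 0; first by rewrite normr0 mul1r is_norm0.
  by exfalso; apply: S0; exists (`|u|^-1 *: u); exact: S_dir.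
have S_compact : compact S.
  apply: bounded_closed_compact.
    by exists 1; split; [exact: num_real | move=> M M1 u /= ->; exact: ltW].
  apply: (@preimage_closed _ _ (fun u : 'rV[R]_n => `|u|) [set 1]); last exact: closed_eq.
  by move=> u _; exact: norm_continuous.
have [v /set_mem Sv Nv_min] : exists2 v, v \in S & forall u, u \in S -> N v <= N u.
  apply: compact_EVT_min => //; first by exists v0.
  by apply: continuous_subspaceT => u; exact: is_norm_continuous.
have Nv_gt0 : 0 < N v.
  apply: is_norm_gt0; apply/eqP => v_eq0; move: Sv.
  by rewrite /S /= v_eq0 normr0 => /esym/eqP; rewrite oner_eq0.
exists (N v)^-1; first by rewrite invr_gt0.
move=> u; have [->|u0] := eqVneq u 0; first by rewrite normr0 is_norm0 mulr0.
rewrite mulrC ler_pdivlMr // [leRHS]N_dir ler_pM2l ?normr_gt0 //.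
by apply: Nv_min; apply/mem_set; exact: S_dir.
Qed.

End finite_dimensional_norm.

Section dual_norm.
Variables (R : realType) (n : nat) (N g : 'rV[R]_n -> R).
Hypotheses (normN : is_norm N) (g_linear : scalar g).

Let g0 : g 0 = 0.
Proof. by have := g_linear 1 0 0; rewrite scale1r addr0 mul1r; lra. Qed.

Let gZ a u : g (a *: u) = a * g u.
Proof. by have := g_linear a u 0; rewrite addr0 g0 addr0. Qed.

Lemma dual_norm_ub u : N u <= 1 -> g u <= dual_norm N g.
Proof.
have [c c_gt0 Nc] := mx_norm_le_is_norm normN.
move=> Nu1; apply: ub_le_sup; last by exists u.
exists ((\sum_(i < n) `|g (delta_mx ord0 i)|) * c) => _ [v /= Nv1 <-].
apply: le_trans (@sublinear_le_mx_norm _ _ g (fun x => `|g x|) _ _ _ _ v) _.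
- by move=> x y; have := g_linear 1 x y; rewrite scale1r mul1r => ->.
- by rewrite g0.
- by move=> a x; rewrite gZ -normrM ler_norm.
- by [].
rewrite ler_wpM2l ?sumr_ge0 //; apply: le_trans (Nc v) _.
by rewrite ler_piMr // ltW.
Qed.

Lemma dual_norm_ge0 : 0 <= dual_norm N g.
Proof. by rewrite -g0; apply: dual_norm_ub; rewrite (is_norm0 normN). Qed.

Lemma dual_norm_holder u : g u <= dual_norm N g * N u.
Proof.
have [->|u0] := eqVneq u 0; first by rewrite g0 (is_norm0 normN) mulr0.
have Nu_gt0 := is_norm_gt0 normN u0.
rewrite -ler_pdivrMr // mulrC -gZ; apply: dual_norm_ub.
by case: normN => _ _ NZ _; rewrite NZ ger0_norm ?mulVf ?gt_eqF // invr_ge0 ltW.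
Qed.

End dual_norm.

Section real_inequalities.
Variable R : realType.

Lemma ler_of_forall_mul1B (Q D : R) : 0 <= D ->
  (forall t, 0 < t <= 1 -> (1 - t) * Q <= D) -> Q <= D.
Proof.
move=> D_ge0 QD; rewrite leNgt; apply/negP => DQ.
have Q_gt0 : 0 < Q by apply: le_lt_trans DQ.
pose t := (Q - D) / (2 * Q).
have t_gt0 : 0 < t by rewrite divr_gt0 ?subr_gt0 // mulr_gt0.
have t_le1 : t <= 1 by rewrite ler_pdivrMr ?mulr_gt0 //; lra.
have : (1 - t) * Q = (Q + D) / 2 by rewrite /t; field; apply/eqP; lra.
have := QD t; rewrite t_gt0 t_le1 => /(_ isT); lra.
Qed.

Lemma sqrtrD_le (a b : R) : 0 <= a -> 0 <= b ->
  Num.sqrt a + Num.sqrt b <= Num.sqrt (2 * (a + b)).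
Proof.
move=> a_ge0 b_ge0.
have s_ge0 : 0 <= Num.sqrt a + Num.sqrt b by rewrite addr_ge0 ?sqrtr_ge0.
rewrite -(ger0_norm s_ge0) -sqrtr_sqr ler_sqrt; last by rewrite mulr_ge0 ?addr_ge0.
have := sqr_sqrtr a_ge0; have := sqr_sqrtr b_ge0.
have := sqr_ge0 (Num.sqrt a - Num.sqrt b); nra.
Qed.

Lemma ratio_le_sqrt2_div_sqrt (g d r a mu : R) : 0 < mu -> 0 <= d -> 0 < r ->
  g <= d * r -> mu / 2 * r ^+ 2 <= a ->
  g / Num.sqrt a <= Num.sqrt 2 * (d / Num.sqrt mu).
Proof.
move=> mu_gt0 d_ge0 r_gt0 gdr growth.
have a_gt0 : 0 < a.
  by apply: lt_le_trans growth; rewrite mulr_gt0 ?divr_gt0 // exprn_gt0.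
have sqrt_mu_gt0 : 0 < Num.sqrt mu by rewrite sqrtr_gt0.
have r_le : Num.sqrt mu * r <= Num.sqrt 2 * Num.sqrt a.
  rewrite -[r](ger0_norm (ltW r_gt0)) -sqrtr_sqr -sqrtrM; last exact: ltW.
  by rewrite -sqrtrM // ler_sqrt; [lra | rewrite mulr_ge0 // ltW].
rewrite ler_pdivrMr ?sqrtr_gt0 //; apply: le_trans gdr _.
have -> : Num.sqrt 2 * (d / Num.sqrt mu) * Num.sqrt a =
    d * (Num.sqrt 2 * Num.sqrt a / Num.sqrt mu) by ring.
by rewrite ler_wpM2l // ler_pdivlMr // mulrC.
Qed.

End real_inequalities.

Section strong_convexity.
Variables (R : realType) (n : nat) (N : 'rV[R]_n -> R) (mu : R).
Variables (X : set 'rV[R]_n) (f : 'rV[R]_n -> R).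
Hypothesis f_sc : strongly_convex_on N mu X f.

Lemma strongly_convex_onW a b t : 0 <= mu -> X a -> X b -> 0 <= t <= 1 ->
  f (t *: a + (1 - t) *: b) <= t * f a + (1 - t) * f b.
Proof.
move=> mu_ge0 Xa Xb /[dup] /andP[t_ge0 t_le1] t01.
have := f_sc Xa Xb t01; suff : 0 <= mu / 2 * t * (1 - t) * N (a - b) ^+ 2 by lra.
by rewrite mulr_ge0 ?sqr_ge0 // !mulr_ge0 ?divr_ge0 ?subr_ge0.
Qed.

Lemma strongly_convex_min_growth xs x : convex_set_rV X -> X xs -> X x ->
  (forall x', X x' -> f xs <= f x') -> mu / 2 * N (x - xs) ^+ 2 <= f x - f xs.
Proof.
move=> X_cvx Xxs Xx xs_min.
apply: ler_of_forall_mul1B => [|t /andP[t_gt0 t_le1]]; first by rewrite subr_ge0 xs_min.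
have t01 : 0 <= t <= 1 by rewrite ltW.
rewrite -(ler_pM2l t_gt0).
have := f_sc Xx Xxs t01; have := xs_min _ (X_cvx _ _ _ Xx Xxs t01); lra.
Qed.

End strong_convexity.

Section partial_continuity.
Variables (T U W : topologicalType) (f : T * U -> W) (x : T) (y : U).
Hypothesis f_cont : {for (x, y), continuous f}.

Lemma continuous_pair_l : {for x, continuous (fun x => f (x, y))}.
Proof. exact: cvg_comp (cvg_pair cvg_id (cvg_cst y)) f_cont. Qed.

Lemma continuous_pair_r : {for y, continuous (fun y => f (x, y))}.
Proof. exact: cvg_comp (cvg_pair (cvg_cst x) cvg_id) f_cont. Qed.

End partial_continuity.

Section partial_gradients.
Variables (R : realType) (n m : nat) (L : 'rV[R]_n -> 'rV[R]_m -> R).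

Lemma grad_x_linear x y : scalar (grad_x L x y).
Proof.
move=> a u v; rewrite /grad_x -linearP /=; congr ('d _ _ _).
by rewrite -[RHS]/(a *: u + v, a *: (0 : 'rV_m) + 0) scaler0 addr0.
Qed.

Lemma grad_y_linear x y : scalar (grad_y L x y).
Proof.
move=> a u v; rewrite /grad_y -linearP /=; congr ('d _ _ _).
by rewrite -[RHS]/(a *: (0 : 'rV_n) + 0, a *: u + v) scaler0 addr0.
Qed.

Lemma grad_x_ge (N : 'rV[R]_n -> R) mu X x y x' :
  strongly_convex_on N mu X (fun x => L x y) -> 0 <= mu ->
  differentiable (Lpair L) (x, y) -> X x -> X x' ->
  L x y - L x' y <= grad_x L x y (x - x').
Proof.
move=> L_sc mu_ge0 dL Xx Xx'.
have first_order : 'd (Lpair L) (x, y) ((x', y) - (x, y)) <= L x' y - L x y.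
  apply: convex_diff_le => // t /andP[t_gt0 t_le1].
  have -> : t *: (x', y) + (1 - t) *: (x, y) = (t *: x' + (1 - t) *: x, y).
    by congr pair; rewrite /= -scalerDl addrC subrK scale1r.
  by apply: (strongly_convex_onW L_sc); rewrite // (ltW t_gt0) t_le1.
suff -> : grad_x L x y (x - x') = - 'd (Lpair L) (x, y) ((x', y) - (x, y)) by lra.
rewrite /grad_x -linearN; congr ('d _ _ _).
by rewrite -[RHS]/(- (x' - x), - (y - y)) opprB subrr oppr0.
Qed.

Lemma grad_y_ge (N : 'rV[R]_m -> R) mu Y x y y' :
  strongly_convex_on N mu Y (fun y => - L x y) -> 0 <= mu ->
  differentiable (Lpair L) (x, y) -> Y y -> Y y' ->
  L x y' - L x y <= grad_y L x y (y' - y).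
Proof.
move=> L_sc mu_ge0 dL Yy Yy'.
have first_order : 'd (- Lpair L) (x, y) ((x, y') - (x, y)) <= - L x y' - - L x y.
  rewrite -[X in _ <= X]/((- Lpair L) (x, y') - (- Lpair L) (x, y)).
  apply: convex_diff_le => [|t /andP[t_gt0 t_le1]]; first exact: differentiableN.
  have -> : t *: (x, y') + (1 - t) *: (x, y) = (x, t *: y' + (1 - t) *: y).
    by congr pair; rewrite /= -scalerDl addrC subrK scale1r.
  by apply: (strongly_convex_onW L_sc); rewrite // (ltW t_gt0) t_le1.
suff -> : grad_y L x y (y' - y) = - 'd (- Lpair L) (x, y) ((x, y') - (x, y)) by lra.
rewrite diffN // opprK /grad_y; congr ('d _ _ _).
by rewrite -[RHS]/(x - x, y' - y) subrr.
Qed.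

End partial_gradients.

Section extrema_on_image.
Variables (R : realType) (T : Type) (f : T -> R) (A : set T) (a : T).
Hypothesis Aa : A a.

Lemma sup_image_argmax : (forall b, A b -> f b <= f a) -> sup (f @` A) = f a.
Proof.
move=> a_max; have f_ub : ubound (f @` A) (f a) by move=> _ [b Ab <-]; exact: a_max.
apply/eqP; rewrite eq_le ge_sup //=; last by exists (f a), a.
by apply: ub_le_sup; [exists (f a) | exists a].
Qed.

Lemma inf_image_argmin : (forall b, A b -> f a <= f b) -> inf (f @` A) = f a.
Proof.
move=> a_min; have f_lb : lbound (f @` A) (f a) by move=> _ [b Ab <-]; exact: a_min.
apply/eqP; rewrite eq_le lb_le_inf ?andbT //=; last by exists (f a), a.
by apply: ge_inf; [exists (f a) | exists a].
Qed.

End extrema_on_image.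

Section saddle_point.
Variables (R : realType) (n m : nat) (NX : 'rV[R]_n -> R) (NY : 'rV[R]_m -> R).
Variables (X : set 'rV[R]_n) (Y : set 'rV[R]_m) (L : 'rV[R]_n -> 'rV[R]_m -> R).
Variables (muX muY : R) (xs : 'rV[R]_n) (ys : 'rV[R]_m).
Hypotheses (normNX : is_norm NX) (normNY : is_norm NY).
Hypotheses (X_neq0 : X !=set0) (Y_neq0 : Y !=set0).
Hypotheses (X_cvx : convex_set_rV X) (Y_cvx : convex_set_rV Y).
Hypotheses (X_compact : compact X) (Y_compact : compact Y).
Hypothesis dL : forall x y, X x -> Y y -> differentiable (Lpair L) (x, y).
Hypotheses (muX_gt0 : 0 < muX) (muY_gt0 : 0 < muY).
Hypothesis L_scx : forall y, Y y -> strongly_convex_on NX muX X (fun x => L x y).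
Hypothesis L_scy : forall x, X x -> strongly_convex_on NY muY Y (fun y => - L x y).
Hypotheses (Xxs : X xs) (Yys : Y ys).
Hypothesis saddle : forall x y, X x -> Y y -> L xs y <= L xs ys /\ L xs ys <= L x ys.

Local Notation yh := (yhat L Y).
Local Notation xh := (xhat L X).

Lemma yhatP x : X x -> Y (yh x) /\ forall y, Y y -> L x y <= L x (yh x).
Proof.
move=> Xx; apply: (@xgetPex _ 0 [set y | Y y /\ forall y', Y y' -> L x y' <= L x y]).
have [y /set_mem Yy y_max] : exists2 y, y \in Y & forall y', y' \in Y -> L x y' <= L x y.
  apply: compact_EVT_max => //; apply: continuous_in_subspaceT => y /set_mem Yy.
  exact: continuous_pair_r (differentiable_continuous (dL Xx Yy)).
by exists y; split => // y' /mem_set; exact: y_max.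
Qed.

Lemma xhatP y : Y y -> X (xh y) /\ forall x, X x -> L (xh y) y <= L x y.
Proof.
move=> Yy; apply: (@xgetPex _ 0 [set x | X x /\ forall x', X x' -> L x y <= L x' y]).
have [x /set_mem Xx x_min] : exists2 x, x \in X & forall x', x' \in X -> L x y <= L x' y.
  apply: compact_EVT_min => //; apply: continuous_in_subspaceT => x /set_mem Xx.
  exact: continuous_pair_l (differentiable_continuous (dL Xx Yy)).
by exists x; split => // x' /mem_set; exact: x_min.
Qed.

Lemma gapE x y : X x -> Y y -> gap L X Y (x, y) = L x (yh x) - L (xh y) y.
Proof.
move=> Xx Yy; have [Yyh yh_max] := yhatP Xx; have [Xxh xh_min] := xhatP Yy.
by rewrite /gap /= (sup_image_argmax Yyh yh_max) (inf_image_argmin Xxh xh_min).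
Qed.

Local Notation Ls := (L xs ys).

Lemma growth_x x : X x -> muX / 2 * NX (x - xs) ^+ 2 <= L x ys - Ls.
Proof.
move=> Xx; apply: (strongly_convex_min_growth (L_scx Yys)) => // x' Xx'.
exact: (saddle Xx' Yys).2.
Qed.

Lemma growth_y y : Y y -> muY / 2 * NY (ys - y) ^+ 2 <= Ls - L xs y.
Proof.
move=> Yy; rewrite -opprB is_normN //.
have ys_min y' : Y y' -> - Ls <= - L xs y'.
  by move=> Yy'; rewrite lerN2; exact: (saddle Xxs Yy').1.
have := strongly_convex_min_growth (L_scy Xxs) Y_cvx Yys Yy ys_min; lra.
Qed.

Lemma excess_x_le_grad x : X x -> L x (yh x) - Ls <= grad_x L x (yh x) (x - xs).
Proof.
move=> Xx; have [Yyh _] := yhatP Xx.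
have := grad_x_ge (L_scx Yyh) (ltW muX_gt0) (dL Xx Yyh) Xx Xxs.
have := (saddle Xxs Yyh).1; lra.
Qed.

Lemma excess_y_le_grad y : Y y -> Ls - L (xh y) y <= grad_y L (xh y) y (ys - y).
Proof.
move=> Yy; have [Xxh _] := xhatP Yy.
have := grad_y_ge (L_scy Xxh) (ltW muY_gt0) (dL Xxh Yy) Yy Yys.
have := (saddle Xxh Yys).2; lra.
Qed.

Lemma ratio_x_le_P_X x : X x -> x != xs ->
  ((grad_x L x (yh x) (x - xs) / Num.sqrt (L x ys - Ls))%:E
    <= P_X L X Y xs ys)%E.
Proof. by move=> Xx xxs; apply: ereal_sup_ubound; exists x => //; split => //; exact/eqP. Qed.

Lemma ratio_y_le_P_Y y : Y y -> y != ys ->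
  ((grad_y L (xh y) y (ys - y) / Num.sqrt (Ls - L xs y))%:E
    <= P_Y L X Y xs ys)%E.
Proof. by move=> Yy yys; apply: ereal_sup_ubound; exists y => //; split => //; exact/eqP. Qed.

Lemma growth_x_gt0 x : X x -> x != xs -> 0 < L x ys - Ls.
Proof.
move=> Xx xxs; apply: lt_le_trans (growth_x Xx).
by rewrite mulr_gt0 ?divr_gt0 ?exprn_gt0 ?is_norm_gt0 // subr_eq0.
Qed.

Lemma growth_y_gt0 y : Y y -> y != ys -> 0 < Ls - L xs y.
Proof.
move=> Yy yys; apply: lt_le_trans (growth_y Yy).
by rewrite mulr_gt0 ?divr_gt0 ?exprn_gt0 ?is_norm_gt0 // subr_eq0 eq_sym.
Qed.

Lemma excess_x_le_P_X x : X x ->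
  ((L x (yh x) - Ls)%:E <= P_X L X Y xs ys * (Num.sqrt (L x ys - Ls))%:E)%E.
Proof.
move=> Xx; have [->|xxs] := eqVneq x xs.
  rewrite subrr sqrtr0 mule0 lee_fin subr_le0.
  exact: (saddle Xxs (yhatP Xxs).1).1.
apply: le_trans (lee_wpmul2r _ (ratio_x_le_P_X Xx xxs)); last by rewrite lee_fin sqrtr_ge0.
rewrite -EFinM divfK ?lee_fin ?excess_x_le_grad //.
by rewrite sqrtr_eq0 -ltNge growth_x_gt0.
Qed.

Lemma excess_y_le_P_Y y : Y y ->
  ((Ls - L (xh y) y)%:E <= P_Y L X Y xs ys * (Num.sqrt (Ls - L xs y))%:E)%E.
Proof.
move=> Yy; have [->|yys] := eqVneq y ys.
  rewrite subrr sqrtr0 mule0 lee_fin subr_le0.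
  exact: (saddle (xhatP Yys).1 Yys).2.
apply: le_trans (lee_wpmul2r _ (ratio_y_le_P_Y Yy yys)); last by rewrite lee_fin sqrtr_ge0.
rewrite -EFinM divfK ?lee_fin ?excess_y_le_grad //.
by rewrite sqrtr_eq0 -ltNge growth_y_gt0.
Qed.

Lemma P_X_ge0 x : X x -> x != xs -> (0 <= P_X L X Y xs ys)%E.
Proof.
move=> Xx xxs; apply: le_trans (ratio_x_le_P_X Xx xxs).
rewrite lee_fin divr_ge0 ?sqrtr_ge0 //; apply: le_trans (excess_x_le_grad Xx).
by rewrite subr_ge0; apply: le_trans (saddle Xx Yys).2 _; exact: (yhatP Xx).2.
Qed.

Lemma P_Y_ge0 y : Y y -> y != ys -> (0 <= P_Y L X Y xs ys)%E.
Proof.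
move=> Yy yys; apply: le_trans (ratio_y_le_P_Y Yy yys).
rewrite lee_fin divr_ge0 ?sqrtr_ge0 //; apply: le_trans (excess_y_le_grad Yy).
by rewrite subr_ge0; apply: le_trans _ (saddle Xxs Yy).1; exact: (xhatP Yy).2.
Qed.

Lemma gap_le_P_L z : X z.1 -> Y z.2 ->
  ((gap L X Y z)%:E <= P_L L X Y xs ys * (Num.sqrt (2 * wgap L xs ys z))%:E)%E.
Proof.
case: z => x y /= Xx Yy; rewrite gapE // /wgap /=.
have P_X_le : (P_X L X Y xs ys <= P_L L X Y xs ys)%E by rewrite /P_L le_max lexx.
have P_Y_le : (P_Y L X Y xs ys <= P_L L X Y xs ys)%E by rewrite /P_L le_max lexx orbT.
have gap_le : ((L x (yh x) - L (xh y) y)%:E <= P_L L X Y xs ys *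
    (Num.sqrt (L x ys - Ls) + Num.sqrt (Ls - L xs y))%:E)%E.
  rewrite -[L x _ - _](subrKA Ls) EFinD (EFinD (Num.sqrt _)).
  rewrite ge0_muleDr ?lee_fin ?sqrtr_ge0 //.
  apply: leeD.
    apply: le_trans (excess_x_le_P_X Xx) _.
    by apply: lee_wpmul2r; rewrite ?lee_fin ?sqrtr_ge0.
  apply: le_trans (excess_y_le_P_Y Yy) _.
  by apply: lee_wpmul2r; rewrite ?lee_fin ?sqrtr_ge0.
rewrite -[L x ys - _](subrKA Ls); apply: le_trans gap_le _.
have [P_L_ge0|P_L_lt0] := leP 0%E (P_L L X Y xs ys).
  apply: lee_wpmul2l; rewrite // lee_fin sqrtrD_le // subr_ge0.
    exact: (saddle Xx Yys).2.
  exact: (saddle Xxs Yy).1.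
have [-> ->] : x = xs /\ y = ys.
  split; apply/eqP; apply: contraTT P_L_lt0 => ne; rewrite -leNgt.
    exact: le_trans (P_X_ge0 Xx ne) P_X_le.
  exact: le_trans (P_Y_ge0 Yy ne) P_Y_le.
by rewrite !subrr !addr0 mulr0 !sqrtr0 addr0.
Qed.

Lemma ratio_x_le_dual_norm x : X x -> x != xs ->
  grad_x L x (yh x) (x - xs) / Num.sqrt (L x ys - Ls)
    <= Num.sqrt 2 * (dual_norm NX (grad_x L x (yh x)) / Num.sqrt muX).
Proof.
move=> Xx xxs; apply: ratio_le_sqrt2_div_sqrt (growth_x Xx) => //.
- exact: dual_norm_ge0 normNX (grad_x_linear L x (yh x)).
- by rewrite is_norm_gt0 // subr_eq0.
- exact: dual_norm_holder normNX (grad_x_linear L x (yh x)) (x - xs).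
Qed.

Lemma ratio_y_le_dual_norm y : Y y -> y != ys ->
  grad_y L (xh y) y (ys - y) / Num.sqrt (Ls - L xs y)
    <= Num.sqrt 2 * (dual_norm NY (grad_y L (xh y) y) / Num.sqrt muY).
Proof.
move=> Yy yys; apply: ratio_le_sqrt2_div_sqrt (growth_y Yy) => //.
- exact: dual_norm_ge0 normNY (grad_y_linear L (xh y) y).
- by rewrite is_norm_gt0 // subr_eq0 eq_sym.
- exact: dual_norm_holder normNY (grad_y_linear L (xh y) y) (ys - y).
Qed.

Lemma P_L_le_sup_dual_norm : (P_L L X Y xs ys <=
  (Num.sqrt 2)%:E *
  ereal_sup [set (Num.max (dual_norm NX (grad_x L z.1 z.2) / Num.sqrt muX)
                          (dual_norm NY (grad_y L z.1 z.2) / Num.sqrt muY))%:E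
            | z in [set z : 'rV[R]_n * 'rV[R]_m | X z.1 /\ Y z.2]])%E.
Proof.
set S := ereal_sup _.
have le_S z r : X z.1 -> Y z.2 ->
    r <= Num.max (dual_norm NX (grad_x L z.1 z.2) / Num.sqrt muX)
                 (dual_norm NY (grad_y L z.1 z.2) / Num.sqrt muY) ->
    ((Num.sqrt 2 * r)%:E <= (Num.sqrt 2)%:E * S)%E.
  move=> Xz Yz r_le; rewrite EFinM; apply: lee_wpmul2l; first by rewrite lee_fin sqrtr_ge0.
  by move: r_le; rewrite -lee_fin => /le_trans; apply; apply: ereal_sup_ubound; exists z.
rewrite /P_L ge_max; apply/andP; split; apply/ereal_supP => _ [v [Xv vs] <-].
  pose r := dual_norm NX (grad_x L v (yh v)) / Num.sqrt muX.
  apply: le_trans (le_S (v, yh v) r Xv (yhatP Xv).1 _); last by rewrite le_max lexx.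
  by rewrite lee_fin; apply: ratio_x_le_dual_norm => //; exact/eqP.
pose r := dual_norm NY (grad_y L (xh v) v) / Num.sqrt muY.
apply: le_trans (le_S (xh v, v) r (xhatP Xv).1 Xv _); last by rewrite le_max lexx orbT.
by rewrite lee_fin; apply: ratio_y_le_dual_norm => //; exact/eqP.
Qed.

End saddle_point.

Theorem proposition15 (R : realType) (n m : nat)
  (NX : 'rV[R]_n -> R) (NY : 'rV[R]_m -> R)
  (X : set 'rV[R]_n) (Y : set 'rV[R]_m)
  (L : 'rV[R]_n -> 'rV[R]_m -> R) (muX muY : R) (xs : 'rV[R]_n) (ys : 'rV[R]_m) :
  is_norm NX -> is_norm NY ->
  X !=set0 -> Y !=set0 -> convex_set_rV X -> convex_set_rV Y ->
  compact X -> compact Y ->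
  (forall x y, X x -> Y y -> differentiable (Lpair L) (x, y)) ->
  0 < muX -> 0 < muY ->
  (forall y, Y y -> strongly_convex_on NX muX X (fun x => L x y)) ->
  (forall x, X x -> strongly_convex_on NY muY Y (fun y => - L x y)) ->
  X xs -> Y ys ->
  (forall x y, X x -> Y y -> L xs y <= L xs ys /\ L xs ys <= L x ys) ->
  (forall z : 'rV[R]_n * 'rV[R]_m, X z.1 -> Y z.2 ->
     ((gap L X Y z)%:E <= P_L L X Y xs ys * (Num.sqrt (2 * wgap L xs ys z))%:E)%E)
  /\
  (P_L L X Y xs ys <=
     (Num.sqrt 2)%:E *
     ereal_sup [set (Num.max (dual_norm NX (grad_x L z.1 z.2) / Num.sqrt muX)
                             (dual_norm NY (grad_y L z.1 z.2) / Num.sqrt muY))%:E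
               | z in [set z : 'rV[R]_n * 'rV[R]_m | X z.1 /\ Y z.2]])%E.
Proof.
move=> normNX normNY X_neq0 Y_neq0 X_cvx Y_cvx X_compact Y_compact dL muX_gt0 muY_gt0
  L_scx L_scy Xxs Yys saddle.
split.
- exact: (gap_le_P_L normNX normNY X_neq0 Y_neq0 X_cvx Y_cvx X_compact Y_compact
    dL muX_gt0 muY_gt0 L_scx L_scy Xxs Yys saddle).
- exact: (P_L_le_sup_dual_norm normNX normNY X_neq0 Y_neq0 X_cvx Y_cvx X_compact
    Y_compact dL muX_gt0 muY_gt0 L_scx L_scy Xxs Yys saddle).
Qed.
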